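(* Let $D$ be a strongly connected digraph, $T$ a DFS tree of $D$ rooted at $r$, and $H$ a connected subdigraph of $T$. Let $G_H$ be the undirected graph with vertex set $V(H)$ in which $uv$ is an edge whenever $D$ has a backward arc (with respect to $T$) from $u$ to $v$ or from $v$ to $u$. Then $\chi_A(D\langle V(H)\rangle)\le \chi(G_H)$.
   Context: Digraphs are finite and loopless; paths and cycles are directed. $D\langle U\rangle$ denotes the subdigraph of $D$ induced by $U\subseteq V(D)$. $\chi$ is the usual chromatic number of an undirected graph. A set of vertices is acyclic if it induces no directed cycle; $\chi_A$ is the minimum number of colors in a coloring whose color classes are all acyclic. A DFS tree $T$ of a strongly connected digraph $D$ rooted at $r$ is the spanning out-branching of $D$ produced by a depth-first search of $D$ started at $r$. A vertex $v$ is a descendant of $u$ (and $u$ an ancestor of $v$) if $T$ contains a directed $uv$-path. An arc $(u,v)$ of $D$ is a backward arc if $u$ is a descendant of $v$. *)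

From mathcomp Require Import all_boot.
Set Implicit Arguments. Unset Strict Implicit. Unset Printing Implicit Defensive.

Section Digraphs.
Variable V : finType.
Variable arc : rel V.

Definition loopless : Prop := forall x, ~~ arc x x.

Definition strongly_connected : Prop := forall x y, connect arc x y.

Definition out_nbrs (u : V) : seq V := [seq w <- enum V | arc u w].

(* Nondeterministic depth-first search.
   [dfs_from vis u vis' t] : starting DFS at u (u not yet visited) with visited
   list [vis], u is marked visited, its out-neighbours are scanned in an
   arbitrary order, each unvisited one is explored recursively (adding the
   tree arc); the final visited list is [vis'] and the tree arcs produced
   are [t].  [dfs_list vis u ns vis' t] scans the remaining neighbours [ns]
   of u. *)
Inductive dfs_from : seq V -> V -> seq V -> seq (V * V) -> Prop :=
| DfsFrom vis u ns vis' t :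
    perm_eq ns (out_nbrs u) ->
    dfs_list (u :: vis) u ns vis' t ->
    dfs_from vis u vis' t
with dfs_list : seq V -> V -> seq V -> seq V -> seq (V * V) -> Prop :=
| DfsNil vis u : dfs_list vis u [::] vis [::]
| DfsSeen vis u w ns vis' t :
    w \in vis -> dfs_list vis u ns vis' t -> dfs_list vis u (w :: ns) vis' t
| DfsNew vis u w ns vis1 t1 vis2 t2 :
    w \notin vis -> dfs_from vis w vis1 t1 -> dfs_list vis1 u ns vis2 t2 ->
    dfs_list vis u (w :: ns) vis2 ((u, w) :: t1 ++ t2).

Definition is_DFS_tree (r : V) (T : rel V) : Prop :=
  exists vis t, dfs_from [::] r vis t /\ forall x y, T x y = ((x, y) \in t).

Definition descendant (T : rel V) (v u : V) : bool := connect T u v.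

Definition backward_arc (T : rel V) (u v : V) : bool :=
  arc u v && descendant T u v.

Definition connected_subdigraph (T : rel V) (VH : {set V}) (EH : rel V) : Prop :=
  (forall x y, EH x y -> [&& T x y, x \in VH & y \in VH]) /\
  (forall x y, x \in VH -> y \in VH ->
     connect [rel a b | EH a b || EH b a] x y).

Definition GH_edge (T : rel V) (VH : {set V}) (u v : V) : bool :=
  [&& u \in VH, v \in VH & backward_arc T u v || backward_arc T v u].

Definition proper_coloring (S : {set V}) (e : rel V) (k : nat) (f : V -> nat) : Prop :=
  (forall x, x \in S -> f x < k) /\
  (forall x y, x \in S -> y \in S -> e x y -> f x != f y).

Definition induced_arc (S : {set V}) : rel V :=
  [rel a b | [&& a \in S, b \in S & arc a b]].

Definition acyclic_set (S : {set V}) : bool :=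
  ~~ [exists x, exists y, induced_arc S x y && connect (induced_arc S) y x].

Definition acyclic_coloring (S : {set V}) (k : nat) (f : V -> nat) : Prop :=
  (forall x, x \in S -> f x < k) /\
  (forall i, acyclic_set [set x in S | f x == i]).

Definition is_chromatic_number (S : {set V}) (e : rel V) (n : nat) : Prop :=
  (exists f, proper_coloring S e n f) /\
  (forall m f, proper_coloring S e m f -> n <= m).

Definition is_acyclic_chromatic_number (S : {set V}) (n : nat) : Prop :=
  (exists f, acyclic_coloring S n f) /\
  (forall m f, acyclic_coloring S m f -> n <= m).

End Digraphs.

From mathcomp Require Import all_boot.

Set Implicit Arguments. Unset Strict Implicit. Unset Printing Implicit Defensive.

(* Number the vertices by DFS finishing time.  Every arc [x -> y] of a strongly
   connected digraph either goes to an ancestor of [x] in the DFS tree (a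
   backward arc) or to a vertex finished before [x].  A proper coloring of
   G_H gives the two ends of every backward arc inside V(H) different colors,
   so inside a color class every arc strictly decreases the finishing time,
   and the class induces no directed cycle. *)

Scheme dfs_from_mind := Induction for dfs_from Sort Prop
  with dfs_list_mind := Induction for dfs_list Sort Prop.

Section RankDecreasing.
Variables (T : finType) (e : rel T) (rk : T -> nat).
Hypothesis e_rk_decr : forall a b, e a b -> rk b < rk a.

Lemma connect_rank_le x y : connect e x y -> rk y <= rk x.
Proof.
case/connectP=> s es ->; elim: s x es => //= z s IHs x /andP[exz es].
exact: leq_trans (IHs z es) (ltnW (e_rk_decr exz)).
Qed.

Lemma rank_decreasing_acyclic x y : e x y -> ~~ connect e y x.
Proof.
move=> exy; apply/negP=> /connect_rank_le cyx.
by have := leq_trans (e_rk_decr exy) cyx; rewrite ltnn.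
Qed.

End RankDecreasing.

Section DepthFirstSearch.
Variables (V : finType) (arc : rel V).

Definition arcs_rel (t : seq (V * V)) : rel V := fun a b => (a, b) \in t.

Lemma connect_arcs_rel_subset (t t' : seq (V * V)) :
  {subset t <= t'} -> subrel (connect (arcs_rel t)) (connect (arcs_rel t')).
Proof. by move=> sub_t; apply: connect_sub => x y xy; apply: connect1; apply: sub_t. Qed.

(* Invariant of a DFS call from [root]: [p] lists the newly visited vertices
   in finishing order, and an arc leaving [p] ends in the previously visited
   [vis], at a tree ancestor, or at a vertex finished earlier. *)
Definition dfs_postorder (vis vis' : seq V) (t : seq (V * V)) (p : seq V)
    (root : V) : Prop :=
  [/\ vis' =i vis ++ p,
      {in p, forall x, x \notin vis},
      {in p, forall x, connect (arcs_rel t) root x} &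
      {in p, forall x y, arc x y ->
         (y \in vis) || (y \in p) && (connect (arcs_rel t) y x || (index y p < index x p))}].

Lemma dfs_postorder_nil vis u : dfs_postorder vis vis [::] [::] u.
Proof. by split=> // x; rewrite cats0. Qed.

Lemma dfs_postorder_finish vis vis' t p u :
  u \notin vis -> {subset out_nbrs arc u <= vis'} ->
  dfs_postorder (u :: vis) vis' t p u -> dfs_postorder vis vis' t (rcons p u) u.
Proof.
move=> u_vis nbrs_vis' [vis'E p_new p_reach p_arcs].
have u_p : u \notin p by apply/negP=> /p_new; rewrite mem_head.
have index_u : index u (rcons p u) = size p.
  by rewrite -cats1 index_cat (negbTE u_p) /= eqxx addn0.
have index_p y : y \in p -> index y (rcons p u) = index y p.
  by move=> y_p; rewrite -cats1 index_cat y_p.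
split.
- by move=> x; rewrite vis'E !mem_cat mem_rcons !in_cons; case: (x == u); rewrite ?orbT.
- move=> x; rewrite mem_rcons in_cons => /orP[/eqP-> // | /p_new].
  by rewrite in_cons negb_or => /andP[].
- move=> x; rewrite mem_rcons in_cons => /orP[/eqP-> | /p_reach //].
  exact: connect0.
- move=> x; rewrite mem_rcons in_cons => /orP[/eqP-> | x_p] y axy.
  + have : y \in vis' by apply: nbrs_vis'; rewrite mem_filter axy mem_enum.
    rewrite vis'E mem_cat in_cons -orbA => /or3P[/eqP-> | -> // | y_p].
    * by rewrite mem_rcons mem_head connect0 orbT.
    * by rewrite mem_rcons in_cons y_p index_u index_p // index_mem y_p !orbT.
  + have := p_arcs x x_p y axy; rewrite in_cons -orbA.
    case/or3P=> [/eqP-> | -> // | /andP[y_p yx]].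
    * by rewrite mem_rcons mem_head p_reach // orbT.
    * by rewrite mem_rcons in_cons y_p !index_p // yx orbT andbT orbT.
Qed.

Lemma dfs_postorder_cat vis vis1 vis2 t1 t2 p1 p2 u w :
  w \in p1 -> dfs_postorder vis vis1 t1 p1 w -> dfs_postorder vis1 vis2 t2 p2 u ->
  dfs_postorder vis vis2 ((u, w) :: t1 ++ t2) (p1 ++ p2) u.
Proof.
move=> w_p1 [vis1E p1_new p1_reach p1_arcs] [vis2E p2_new p2_reach p2_arcs].
set t := (u, w) :: t1 ++ t2.
have sub_t1 : {subset t1 <= t} by move=> a a_t1; rewrite in_cons mem_cat a_t1 orbT.
have sub_t2 : {subset t2 <= t} by move=> a a_t2; rewrite in_cons mem_cat a_t2 !orbT.
have p2_p1 x : x \in p2 -> x \notin p1.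
  by move=> x_p2; have := p2_new x x_p2; rewrite vis1E mem_cat negb_or => /andP[].
split.
- by move=> x; rewrite vis2E mem_cat vis1E !mem_cat orbA.
- move=> x; rewrite mem_cat => /orP[/p1_new // | /p2_new].
  by rewrite vis1E mem_cat negb_or => /andP[].
- move=> x; rewrite mem_cat => /orP[x_p1 | x_p2].
  + apply: (connect_trans (y := w)); first by apply: connect1; rewrite /arcs_rel mem_head.
    exact: connect_arcs_rel_subset sub_t1 _ _ (p1_reach x x_p1).
  + exact: connect_arcs_rel_subset sub_t2 _ _ (p2_reach x x_p2).
- move=> x; rewrite mem_cat => /orP[x_p1 | x_p2] y axy.
  + case/orP: (p1_arcs x x_p1 y axy) => [-> // | /andP[y_p1 yx]].
    rewrite mem_cat y_p1 /= !index_cat y_p1 x_p1.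
    by case/orP: yx => [/(connect_arcs_rel_subset sub_t1)-> | ->]; rewrite !orbT.
  + have x_np1 := p2_p1 x x_p2.
    case/orP: (p2_arcs x x_p2 y axy) => [| /andP[y_p2 yx]].
    * rewrite vis1E mem_cat => /orP[-> // | y_p1].
      rewrite mem_cat y_p1 /= !index_cat y_p1 (negbTE x_np1).
      by rewrite (leq_trans _ (leq_addr _ _)) ?index_mem ?orbT.
    * have y_np1 := p2_p1 y y_p2.
      rewrite mem_cat y_p2 orbT /= !index_cat (negbTE y_np1) (negbTE x_np1) ltn_add2l.
      by case/orP: yx => [/(connect_arcs_rel_subset sub_t2)-> | ->]; rewrite !orbT.
Qed.

Lemma dfs_from_postorder vis u vis' t :
  dfs_from arc vis u vis' t -> u \notin vis ->
  exists2 p, dfs_postorder vis vis' t p u & u \in p.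
Proof.
move: vis u vis' t; apply: (@dfs_from_mind V arc
  (fun vis u vis' t _ => u \notin vis -> exists2 p, dfs_postorder vis vis' t p u & u \in p)
  (fun vis u ns vis' t _ => exists2 p, dfs_postorder vis vis' t p u & {subset ns <= vis'})).
- move=> {}vis {}u ns {}vis' {}t ns_nbrs _ [p post ns_vis'] u_vis.
  exists (rcons p u); last by rewrite mem_rcons mem_head.
  by apply: dfs_postorder_finish post => // y; rewrite -(perm_mem ns_nbrs) => /ns_vis'.
- by move=> {}vis {}u; exists [::]; first exact: dfs_postorder_nil.
- move=> {}vis {}u w ns {}vis' {}t w_vis _ [p post ns_vis']; exists p => //.
  move=> y; rewrite in_cons => /orP[/eqP-> | /ns_vis' //].
  by case: post => -> *; rewrite mem_cat w_vis.
- move=> {}vis {}u w ns vis1 t1 vis2 t2 w_vis _ IHw _ [p2 post2 ns_vis2].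
  have [p1 post1 w_p1] := IHw w_vis.
  exists (p1 ++ p2); first exact: dfs_postorder_cat post1 post2.
  move=> y; rewrite in_cons => /orP[/eqP-> | /ns_vis2 //].
  case: post2 post1 => -> _ _ _ [vis1E _ _ _].
  by rewrite mem_cat vis1E mem_cat w_p1 orbT.
Qed.

Lemma dfs_arc_backward_or_finished_before r vis t :
  strongly_connected arc -> dfs_from arc [::] r vis t ->
  exists fin : V -> nat,
    forall x y, arc x y -> connect (arcs_rel t) y x || (fin y < fin x).
Proof.
move=> sc /dfs_from_postorder/(_ isT)[p [_ _ _ p_arcs] r_p].
have p_all x : x \in p.
  have /connectP[s rs ->] := sc r x; elim: s r r_p rs => //= z s IHs y y_p /andP[ayz zs].
  by apply: IHs zs; case/andP: (p_arcs y y_p z ayz).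
exists (index^~ p) => x y axy.
by case/andP: (p_arcs x (p_all x) y axy).
Qed.

Lemma DFS_tree_arc_backward_or_finished_before r T :
  strongly_connected arc -> is_DFS_tree arc r T ->
  exists fin : V -> nat, forall x y, arc x y -> backward_arc arc T x y || (fin y < fin x).
Proof.
move=> sc [vis [t [dfs_r Tt]]].
have [fin fin_arcs] := dfs_arc_backward_or_finished_before sc dfs_r.
have T_t : connect T =2 connect (arcs_rel t) by apply: eq_connect => a b; rewrite Tt.
by exists fin => x y axy; rewrite /backward_arc /descendant axy T_t fin_arcs.
Qed.

Lemma color_class_acyclic T (VH : {set V}) (fin : V -> nat) (k : nat) (f : V -> nat) :
  (forall x y, arc x y -> backward_arc arc T x y || (fin y < fin x)) ->
  proper_coloring VH (GH_edge arc T VH) k f ->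
  forall i, acyclic_set arc [set x in VH | f x == i].
Proof.
move=> fin_arcs [_ f_proper] i; set S := [set x in VH | f x == i].
have fin_decr a b : induced_arc arc S a b -> fin b < fin a.
  case/and3P; rewrite !inE => /andP[a_VH /eqP fa] /andP[b_VH /eqP fb] ab.
  case/orP: (fin_arcs a b ab) => // back_ab.
  have := f_proper a b a_VH b_VH; rewrite /GH_edge a_VH b_VH back_ab fa fb eqxx.
  by move/(_ isT).
apply/existsP=> -[x /existsP[y /andP[xy yx]]].
by move: yx; apply/negP; apply: rank_decreasing_acyclic fin_decr _ _ xy.
Qed.

End DepthFirstSearch.

Theorem mainTheorem5 (V : finType) (arc : rel V) (r : V) (T : rel V)
    (VH : {set V}) (EH : rel V) (chiA chi : nat) :
  loopless arc ->
  strongly_connected arc ->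
  is_DFS_tree arc r T ->
  connected_subdigraph T VH EH ->
  is_acyclic_chromatic_number arc VH chiA ->
  is_chromatic_number VH (GH_edge arc T VH) chi ->
  chiA <= chi.
Proof.
move=> _ sc dfsT _ [_ chiA_min] [[f f_proper] _].
have [fin fin_arcs] := DFS_tree_arc_backward_or_finished_before sc dfsT.
apply: (chiA_min chi f); split; first by case: f_proper.
exact: color_class_acyclic fin_arcs f_proper.
Qed.
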